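(* $\mathcal{E}_v$ is ground complete for $\simeq$: for all closed monitors $m,n$, if $m\simeq n$ then $\mathcal{E}_v\vdash m=n$.
   Context: Monitors: terms $m,n ::= v \mid a.m \mid m+n \mid x$ over a nonempty action set $\mathit{Act}$ ($a\in\mathit{Act}$) and variables $x$, verdicts $v::=\mathit{end}\mid\mathit{yes}\mid\mathit{no}$; closed monitors contain no variables. Transitions $\xrightarrow{\alpha}$, $\alpha\in\mathit{Act}\cup\{\tau\}$ ($\tau\notin\mathit{Act}$): least relation with $a.m\xrightarrow{a}m$; $m\xrightarrow{\alpha}m'$ implies $m+n\xrightarrow{\alpha}m'$ and $n+m\xrightarrow{\alpha}m'$; $v\xrightarrow{\alpha}v$ for each verdict $v$. Weak transitions: $m\xRightarrow{\varepsilon}m'$ iff $m(\xrightarrow{\tau})^*m'$; $m\xRightarrow{a}m'$ iff $m\xRightarrow{\varepsilon}\xrightarrow{a}\xRightarrow{\varepsilon}m'$; $m\xRightarrow{as'}m'$ ($s'\neq\varepsilon$) iff $m\xRightarrow{a}m_1\xRightarrow{s'}m'$. For closed $m$: $L_a(m)=\{s\in\mathit{Act}^*\mid m\xRightarrow{s}\mathit{yes}\}$, $L_r(m)=\{s\in\mathit{Act}^*\mid m\xRightarrow{s}\mathit{no}\}$; $m\simeq n$ iff $L_a(m)=L_a(n)$ and $L_r(m)=L_r(n)$. $\mathcal{E}\vdash m=n$ denotes derivability by reflexivity, symmetry, transitivity, substitution and congruence for $a.\_$ and $+$. $\mathcal{E}_v$ consists of (A1) $x+y=y+x$; (A2) $x+(y+z)=(x+y)+z$;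 (A3) $x+x=x$; (A4) $x+\mathit{end}=x$; and, for each $a\in\mathit{Act}$, ($E_a$) $a.\mathit{end}=\mathit{end}$; ($Y_a$) $\mathit{yes}=\mathit{yes}+a.\mathit{yes}$; ($N_a$) $\mathit{no}=\mathit{no}+a.\mathit{no}$; ($D_a$) $a.(x+y)=a.x+a.y$. *)

From Stdlib Require Import List Relations.
Import ListNotations.
Set Implicit Arguments.

Inductive verdict : Type := vend | vyes | vno.

Inductive mon (Act : Type) : Type :=
| Verd : verdict -> mon Act
| Pre  : Act -> mon Act -> mon Act
| Sum  : mon Act -> mon Act -> mon Act
| Var  : nat -> mon Act.
Arguments Verd {Act} _.
Arguments Var {Act} _.

Fixpoint closed {Act : Type} (m : mon Act) : Prop :=
  match m with
  | Verd _ => True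
  | Pre _ m => closed m
  | Sum m n => closed m /\ closed n
  | Var _ => False
  end.

(* labels: Some a for a in Act, None for tau *)
Inductive step {Act : Type} : mon Act -> option Act -> mon Act -> Prop :=
| step_pre  : forall a m, step (Pre a m) (Some a) m
| step_suml : forall m n al m', step m al m' -> step (Sum m n) al m'
| step_sumr : forall m n al m', step m al m' -> step (Sum n m) al m'
| step_verd : forall v al, step (Verd v) al (Verd v).

Definition tau_star {Act : Type} : mon Act -> mon Act -> Prop :=
  clos_refl_trans (mon Act) (fun m m' => step m None m').

Definition weak1 {Act : Type} (m : mon Act) (a : Act) (m' : mon Act) : Prop :=
  exists m1 m2, tau_star m m1 /\ step m1 (Some a) m2 /\ tau_star m2 m'.

Fixpoint weak {Act : Type} (m : mon Act) (s : list Act) (m' : mon Act) : Prop :=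
  match s with
  | [] => tau_star m m'
  | a :: s' =>
      match s' with
      | [] => weak1 m a m'
      | _ :: _ => exists m1, weak1 m a m1 /\ weak m1 s' m'
      end
  end.

Definition L_a {Act : Type} (m : mon Act) (s : list Act) : Prop := weak m s (Verd vyes).
Definition L_r {Act : Type} (m : mon Act) (s : list Act) : Prop := weak m s (Verd vno).

Definition mon_equiv {Act : Type} (m n : mon Act) : Prop :=
  (forall s, L_a m s <-> L_a n s) /\ (forall s, L_r m s <-> L_r n s).

Fixpoint subst {Act : Type} (sg : nat -> mon Act) (m : mon Act) : mon Act :=
  match m with
  | Verd v => Verd v
  | Pre a m => Pre a (subst sg m)
  | Sum m n => Sum (subst sg m) (subst sg n)
  | Var x => sg x
  end.

(* The axiom system E_v, with x = Var 0, y = Var 1, z = Var 2 *)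
Inductive Ev {Act : Type} : mon Act -> mon Act -> Prop :=
| A1 : Ev (Sum (Var 0) (Var 1)) (Sum (Var 1) (Var 0))
| A2 : Ev (Sum (Var 0) (Sum (Var 1) (Var 2))) (Sum (Sum (Var 0) (Var 1)) (Var 2))
| A3 : Ev (Sum (Var 0) (Var 0)) (Var 0)
| A4 : Ev (Sum (Var 0) (Verd vend)) (Var 0)
| Ea : forall a, Ev (Pre a (Verd vend)) (Verd vend)
| Ya : forall a, Ev (Verd vyes) (Sum (Verd vyes) (Pre a (Verd vyes)))
| Na : forall a, Ev (Verd vno) (Sum (Verd vno) (Pre a (Verd vno)))
| Da : forall a, Ev (Pre a (Sum (Var 0) (Var 1))) (Sum (Pre a (Var 0)) (Pre a (Var 1))).

Inductive derivable {Act : Type} (E : mon Act -> mon Act -> Prop)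
  : mon Act -> mon Act -> Prop :=
| d_ax    : forall m n, E m n -> derivable E m n
| d_refl  : forall m, derivable E m m
| d_sym   : forall m n, derivable E m n -> derivable E n m
| d_trans : forall m n p, derivable E m n -> derivable E n p -> derivable E m p
| d_subst : forall sg m n, derivable E m n -> derivable E (subst sg m) (subst sg n)
| d_pre   : forall a m n, derivable E m n -> derivable E (Pre a m) (Pre a n)
| d_sum   : forall m m' n n', derivable E m m' -> derivable E n n' ->
              derivable E (Sum m n) (Sum m' n').

(* Every closed monitor is provably equal to its normal form: the finite sum
   of the "trace monitors" a1.a2...ak.v, one for each maximal syntactic path
   of the monitor (Var leaves contribute nothing).  Two such sums are provably
   equal as soon as each covers the other, i.e. every trace a1...ak.v with
   v = yes/no in one sum extends a trace with the same verdict in the other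
   (end-traces collapse to end by (E_a) and vanish by (A4)); the extension is
   absorbed because v = v + b.v for yes/no verdicts, distributed through the
   prefix by (D_a).  Semantically, a closed monitor reaches verdict v after a
   word s exactly when some path of the monitor ending in v is a prefix of s,
   because tau-steps only loop on verdicts.  Hence equal acceptance and
   rejection languages force mutual covering of the path lists, and the
   theorem follows by chaining the two normal-form equations. *)

From Stdlib Require Import List Relations.
Import ListNotations.

Section GroundCompleteness.
Context {Act : Type}.
Notation D := (@derivable Act Ev).
Implicit Types (m n k : mon Act) (a : Act) (s t u : list Act) (v : verdict)
  (P Q : list (list Act * verdict)).

Definition subst3 (x y z : mon Act) : nat -> mon Act :=
  fun i => match i with 0 => x | 1 => y | _ => z end.

Lemma sum_comm x y : D (Sum x y) (Sum y x).
Proof. exact (d_subst (subst3 x y y) (d_ax _ _ _ A1)). Qed.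

Lemma sum_assoc x y z : D (Sum x (Sum y z)) (Sum (Sum x y) z).
Proof. exact (d_subst (subst3 x y z) (d_ax _ _ _ A2)). Qed.

Lemma sum_idem x : D (Sum x x) x.
Proof. exact (d_subst (subst3 x x x) (d_ax _ _ _ A3)). Qed.

Lemma sum_end_r x : D (Sum x (Verd vend)) x.
Proof. exact (d_subst (subst3 x x x) (d_ax _ _ _ A4)). Qed.

Lemma sum_end_l x : D (Sum (Verd vend) x) x.
Proof. eapply d_trans; [apply sum_comm | apply sum_end_r]. Qed.

Lemma pre_distr a x y : D (Pre a (Sum x y)) (Sum (Pre a x) (Pre a y)).
Proof. exact (d_subst (subst3 x y y) (d_ax _ _ _ (Da a))). Qed.

Lemma pre_end a : D (Pre a (Verd vend)) (Verd vend).
Proof. apply d_ax, Ea. Qed.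

Definition trace_mon (p : list Act * verdict) : mon Act :=
  fold_right (fun a r => Pre a r) (Verd (snd p)) (fst p).

Definition sum_traces P : mon Act :=
  fold_right (fun p r => Sum (trace_mon p) r) (Verd vend) P.

Fixpoint traces (m : mon Act) : list (list Act * verdict) :=
  match m with
  | Verd v => [([], v)]
  | Pre a m => map (fun p => (a :: fst p, snd p)) (traces m)
  | Sum m n => traces m ++ traces n
  | Var _ => []
  end.

Lemma trace_mon_end t : D (trace_mon (t, vend)) (Verd vend).
Proof.
  induction t as [|a t IH]; simpl.
  - apply d_refl.
  - eapply d_trans; [apply d_pre, IH | apply pre_end].
Qed.

Lemma verdict_absorbs_trace v u : v <> vend ->
  D (Verd v) (Sum (Verd v) (trace_mon (u, v))).
Proof.
  intros Hv. induction u as [|a u IH]; simpl.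
  - apply d_sym, sum_idem.
  - assert (Hloop : D (Verd v) (Sum (Verd v) (Pre a (Verd v)))).
    { destruct v; [contradiction | apply d_ax, Ya | apply d_ax, Na]. }
    eapply d_trans; [exact Hloop |].
    eapply d_trans; [apply d_sum; [apply d_refl | apply d_pre, IH] |].
    eapply d_trans; [apply d_sum; [apply d_refl | apply pre_distr] |].
    eapply d_trans; [apply sum_assoc |].
    apply d_sum; [apply d_sym, Hloop | apply d_refl].
Qed.

Lemma trace_absorbs_extension t u v : v <> vend ->
  D (trace_mon (t, v)) (Sum (trace_mon (t, v)) (trace_mon (t ++ u, v))).
Proof.
  intros Hv. induction t as [|a t IH]; simpl.
  - apply verdict_absorbs_trace, Hv.
  - eapply d_trans; [apply d_pre, IH | apply pre_distr].
Qed.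

Lemma sum_traces_app P Q : D (sum_traces (P ++ Q)) (Sum (sum_traces P) (sum_traces Q)).
Proof.
  induction P as [|p P IH]; simpl.
  - apply d_sym, sum_end_l.
  - eapply d_trans; [apply d_sum; [apply d_refl | exact IH] | apply sum_assoc].
Qed.

Lemma sum_traces_pre a P :
  D (Pre a (sum_traces P)) (sum_traces (map (fun p => (a :: fst p, snd p)) P)).
Proof.
  induction P as [|p P IH]; simpl.
  - apply pre_end.
  - eapply d_trans; [apply pre_distr |]. apply d_sum; [apply d_refl | exact IH].
Qed.

Lemma normal_form m : closed m -> D m (sum_traces (traces m)).
Proof.
  induction m as [v | a m IH | m IHm n IHn | x]; simpl; intros Hc.
  - apply d_sym, sum_end_r.
  - eapply d_trans; [apply d_pre, IH, Hc | apply sum_traces_pre].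
  - destruct Hc as [Hm Hn].
    eapply d_trans; [apply d_sum; [apply IHm, Hm | apply IHn, Hn] |].
    apply d_sym, sum_traces_app.
  - destruct Hc.
Qed.

Lemma sum_traces_absorbs_member p P :
  In p P -> D (Sum (trace_mon p) (sum_traces P)) (sum_traces P).
Proof.
  induction P as [|q P IH]; simpl; intros Hin; [destruct Hin |].
  eapply d_trans; [apply sum_assoc |].
  destruct Hin as [<- | Hin].
  - apply d_sum; [apply sum_idem | apply d_refl].
  - eapply d_trans; [apply d_sum; [apply sum_comm | apply d_refl] |].
    eapply d_trans; [apply d_sym, sum_assoc |].
    apply d_sum; [apply d_refl | auto].
Qed.

Definition covers P Q : Prop :=
  forall t v, In (t, v) Q -> v <> vend ->
    exists t0 u, In (t0, v) P /\ t = t0 ++ u.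

Lemma trace_absorbed_by_cover P t v :
  covers P [(t, v)] -> D (Sum (trace_mon (t, v)) (sum_traces P)) (sum_traces P).
Proof.
  intros Hcov.
  assert (Hcases : v = vend \/ v <> vend) by (destruct v; [left | right | right]; congruence).
  destruct Hcases as [-> | Hv].
  - eapply d_trans; [apply d_sum; [apply trace_mon_end | apply d_refl] | apply sum_end_l].
  - destruct (Hcov t v (or_introl eq_refl) Hv) as [t0 [u [Hin ->]]].
    eapply d_trans;
      [apply d_sum; [apply d_refl | apply d_sym, (sum_traces_absorbs_member _ _ Hin)] |].
    eapply d_trans; [apply sum_assoc |].
    eapply d_trans; [| apply (sum_traces_absorbs_member _ _ Hin)].
    apply d_sum; [| apply d_refl].
    eapply d_trans; [apply sum_comm | apply d_sym, trace_absorbs_extension, Hv].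
Qed.

Lemma sum_traces_absorbs_cover P Q :
  covers P Q -> D (Sum (sum_traces Q) (sum_traces P)) (sum_traces P).
Proof.
  induction Q as [|[t v] Q IH]; simpl; intros Hcov.
  - apply sum_end_l.
  - eapply d_trans; [apply d_sym, sum_assoc |].
    eapply d_trans;
      [apply d_sum; [apply d_refl | apply IH; intros t' v' Hin; apply Hcov; simpl; auto] |].
    apply trace_absorbed_by_cover.
    intros t' v' [Heq | []]; apply Hcov; simpl; auto.
Qed.

Lemma sum_traces_mutual_cover P Q :
  covers P Q -> covers Q P -> D (sum_traces P) (sum_traces Q).
Proof.
  intros HPQ HQP.
  eapply d_trans; [apply d_sym, (sum_traces_absorbs_cover _ _ HPQ) |].
  eapply d_trans; [apply sum_comm | apply sum_traces_absorbs_cover, HQP].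
Qed.

(* Silent steps only loop on verdicts, so they never create new traces. *)
Lemma tau_step_traces m k : step m None k -> incl (traces k) (traces m).
Proof.
  remember None as al eqn:Hal.
  induction 1; simpl; try discriminate; intros p Hp.
  - apply in_or_app; left; exact (IHstep Hal p Hp).
  - apply in_or_app; right; exact (IHstep Hal p Hp).
  - exact Hp.
Qed.

Lemma tau_star_traces {m k} : tau_star m k -> incl (traces k) (traces m).
Proof.
  induction 1 as [m k Hstep | m | m k l _ IHmk _ IHkl].
  - apply tau_step_traces, Hstep.
  - apply incl_refl.
  - eapply incl_tran; eauto.
Qed.

Lemma visible_step_traces {m a k t v} : step m (Some a) k -> In (t, v) (traces k) ->
  In (a :: t, v) (traces m) \/ (t = [] /\ In ([], v) (traces m)).
Proof.
  remember (Some a) as al eqn:Hal.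
  intros Hstep; revert t v; induction Hstep; simpl; intros t' v' Hin.
  - injection Hal as ->. left.
    exact (in_map (fun p => (a :: fst p, snd p)) _ (t', v') Hin).
  - destruct (IHHstep Hal t' v' Hin) as [H | [Ht H]];
      [left | right; split]; auto; apply in_or_app; left; auto.
  - destruct (IHHstep Hal t' v' Hin) as [H | [Ht H]];
      [left | right; split]; auto; apply in_or_app; right; auto.
  - destruct Hin as [Hin | []]. injection Hin as <- <-. right; auto.
Qed.

Lemma weak_cons m a s k :
  weak m (a :: s) k <-> exists m1, weak1 m a m1 /\ weak m1 s k.
Proof.
  destruct s as [|b s]; simpl; [| reflexivity].
  split.
  - intros H; exists k; split; [exact H | apply rt_refl].
  - intros [m1 [[k1 [k2 [H1 [H2 H3]]]] H4]].
    exists k1, k2; split; [exact H1 | split; [exact H2 | eapply rt_trans; eauto]].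
Qed.

Lemma weak_verdict_has_trace s : forall m v, weak m s (Verd v) ->
  exists t u, s = t ++ u /\ In (t, v) (traces m).
Proof.
  induction s as [|a s IH]; intros m v H.
  - exists [], []; split; [reflexivity |].
    apply (tau_star_traces (H : tau_star m (Verd v))); simpl; auto.
  - apply weak_cons in H. destruct H as [m1 [[k [k' [Hk [Hstep Hk']]]] Hw]].
    destruct (IH m1 v Hw) as [t [u [-> Hin]]].
    apply (tau_star_traces Hk') in Hin.
    destruct (visible_step_traces Hstep Hin) as [H | [_ H]].
    + exists (a :: t), u; split; [reflexivity | apply (tau_star_traces Hk), H].
    + exists [], (a :: t ++ u); split; [reflexivity | apply (tau_star_traces Hk), H].
Qed.

Lemma verdict_weak_loop v u : weak (Verd v) u (Verd v).
Proof.
  induction u as [|a u IH].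
  - apply rt_refl.
  - apply weak_cons. exists (Verd v); split; [| exact IH].
    exists (Verd v), (Verd v); split; [apply rt_refl | split; [constructor | apply rt_refl]].
Qed.

(* Weak transitions to a verdict survive enlarging the set of initial steps,
   as needed to pass from a summand to a sum. *)
Section StepInclusion.
Variables m M : mon Act.
Hypothesis step_incl : forall al k, step m al k -> step M al k.

Lemma tau_star_incl {k} : tau_star m k -> k = m \/ tau_star M k.
Proof.
  intros H. apply clos_rt_rt1n in H. destruct H as [| k1 k Hstep Hrest].
  - left; reflexivity.
  - right. eapply rt_trans; [apply rt_step, step_incl, Hstep | apply clos_rt1n_rt, Hrest].
Qed.

Lemma weak_verdict_incl s v : weak m s (Verd v) -> weak M s (Verd v).
Proof.
  destruct s as [|a s]; intros H.
  - destruct (tau_star_incl H) as [Hm | H']; [| exact H'].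
    apply rt_step, step_incl. rewrite <- Hm. apply step_verd.
  - apply weak_cons in H; apply weak_cons.
    destruct H as [m1 [[k [k' [Hk [Hstep Hk']]]] Hw]].
    exists m1; split; [| exact Hw].
    destruct (tau_star_incl Hk) as [-> | H'].
    + exists M, k'; split; [apply rt_refl | split; [apply step_incl, Hstep | exact Hk']].
    + exists k, k'; auto.
Qed.
End StepInclusion.

Lemma trace_weak_verdict m : forall t v, In (t, v) (traces m) ->
  forall u, weak m (t ++ u) (Verd v).
Proof.
  induction m as [w | a m IH | m IHm n IHn | x]; simpl; intros t v Hin u.
  - destruct Hin as [Hin | []]. injection Hin as <- <-. apply verdict_weak_loop.
  - apply in_map_iff in Hin. destruct Hin as [[t' v'] [Heq Hin]].
    injection Heq as <- <-. apply weak_cons. exists m; split; [| apply IH, Hin].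
    exists (Pre a m), m; split; [apply rt_refl | split; [constructor | apply rt_refl]].
  - apply in_app_or in Hin. destruct Hin as [Hin | Hin].
    + apply (weak_verdict_incl m); [intros; apply step_suml; auto | auto].
    + apply (weak_verdict_incl n); [intros; apply step_sumr; auto | auto].
  - destruct Hin.
Qed.

Lemma equiv_covers m n : mon_equiv m n -> covers (traces m) (traces n).
Proof.
  intros [Hacc Hrej] t v Hin Hv.
  assert (Hw := trace_weak_verdict n t v Hin []). rewrite app_nil_r in Hw.
  assert (Hm : weak m t (Verd v)).
  { destruct v; [contradiction | apply Hacc, Hw | apply Hrej, Hw]. }
  destruct (weak_verdict_has_trace t m v Hm) as [t0 [u [-> Hin0]]].
  exists t0, u; auto.
Qed.

Lemma mon_equiv_sym m n : mon_equiv m n -> mon_equiv n m.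
Proof.
  intros [Hacc Hrej]; split; intros s; symmetry; auto.
Qed.

End GroundCompleteness.

Theorem mainTheorem7 (Act : Type) (a0 : Act) (m n : mon Act) :
  closed m -> closed n -> mon_equiv m n -> derivable Ev m n.
Proof.
  intros Hm Hn Heq.
  eapply d_trans; [apply normal_form, Hm |].
  eapply d_trans; [| apply d_sym, normal_form, Hn].
  apply sum_traces_mutual_cover; apply equiv_covers; [exact Heq | apply mon_equiv_sym, Heq].
Qed.
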